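(* Let $\gamma \in (0,1]$. Let $E$ be a valid e-value for a null hypothesis $H_0$, i.e. $E \ge 0$ and $\mathbb{E}[E] \le 1$ under $H_0$, and let $F$ be an arbitrary nonnegative random variable, with any dependence structure between $F$ and $E$. Let $T \in \{0,1\}$ be a random variable such that, conditionally on $(F,E)$, $T \sim \mathrm{Bern}\big((1-\gamma F^{-1})_+\big)$ (i.e. $T$ is drawn based on $F$ using additional independent randomness). Define the active e-value $$\tilde E := (1-T)\,F + T\,(1-\gamma)\,E.$$ Then $\tilde E$ is a valid e-value, i.e. $\tilde E \ge 0$ and $\mathbb{E}[\tilde E] \le 1$ under $H_0$.
   Context: $x_+ = \max(x,0)$. $F$ is a ''proxy'' for $E$ on which no distributional assumption is made (in particular $\mathbb{E}[F]$ may exceed $1$ under $H_0$). When $F = 0$, $(1-\gamma F^{-1})_+$ is interpreted as $0$. *)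

From HB Require Import structures.
From mathcomp Require Import all_boot all_order all_algebra.
From mathcomp Require Import all_classical all_reals all_analysis.
Set Implicit Arguments. Unset Strict Implicit. Unset Printing Implicit Defensive.
Import Order.TTheory GRing.Theory Num.Theory.
Local Open Scope classical_set_scope.
Local Open Scope ring_scope.

Definition bern_param (R : realType) (gamma f : R) : R :=
  if f == 0 then 0 else Num.max (1 - gamma / f) 0.

(* Conditionally on (F,E), T ~ Bern(bern_param gamma F):
   for every measurable A in R x R,
   P(T = 1, (F,E) in A) = E[ bern_param gamma F ; (F,E) in A ],
   i.e. P(T = 1 | F, E) = bern_param gamma F almost surely. *)
Definition cond_bern d (Omega : measurableType d) (R : realType)
  (P : probability Omega R) (gamma : R) (F E T : Omega -> R) : Prop :=
  forall A : set (R * R), measurable A ->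
    P ([set w | T w = 1] `&` ((fun w => (F w, E w)) @^-1` A)) =
    (\int[P]_(w in (fun w => (F w, E w)) @^-1` A) (bern_param gamma (F w))%:E)%E.

Definition active_evalue (R : realType) (gamma : R) (F E T : R) : R :=
  (1 - T) * F + T * (1 - gamma) * E.

From HB Require Import structures.
From mathcomp Require Import all_boot all_order all_algebra.
From mathcomp Require Import all_classical all_reals all_analysis.
From mathcomp Require Import measurable_realfun giry.
Import Order.TTheory GRing.Theory Num.Theory.
Local Open Scope classical_set_scope.
Local Open Scope ring_scope.

(* Given F, the e-value keeps F with probability min(1, gamma / F), so
   E[(1 - T) F] = E[F min(1, gamma / F)] <= gamma, while
   E[T (1 - gamma) E] <= (1 - gamma) E[E] <= 1 - gamma.  The identity for
   E[(1 - T) F] is a change of density: the image under F of P restricted to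
   {T = 0} has density min(1, gamma / y) with respect to the law of F, and
   integrals are transferred through the Radon-Nikodym theorem. *)

Section keep_prob.
Context {R : realType} (gamma : R).
Hypothesis gamma_gt0 : 0 < gamma.

(* Equal to 1 - bern_param gamma y for y >= 0, but nonincreasing on all of R,
   hence measurable. *)
Definition keep_prob (y : R) : R := gamma / Num.max y gamma.

Let max_gt0 y : 0 < Num.max y gamma.
Proof. by rewrite lt_max gamma_gt0 orbT. Qed.

Lemma keep_prob_ge0 y : 0 <= keep_prob y.
Proof. by rewrite divr_ge0 // ltW. Qed.

Lemma mulr_keep_prob_le y : 0 <= y -> y * keep_prob y <= gamma.
Proof.
move=> y0; rewrite mulrA ler_pdivrMr // mulrC ler_wpM2l ?(ltW gamma_gt0) //.
by rewrite le_max lexx.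
Qed.

Lemma keep_prob_nonincreasing : {homo keep_prob : x y / x <= y >-> y <= x}.
Proof.
move=> x y xy; rewrite ler_wpM2l ?(ltW gamma_gt0) // lef_pV2 ?posrE //.
by rewrite ge_max !le_max xy lexx !orbT.
Qed.

Lemma measurable_keep_prob : measurable_fun setT keep_prob.
Proof. exact: nonincreasing_measurable keep_prob_nonincreasing. Qed.

Lemma bern_param_ge0 y : 0 <= bern_param gamma y.
Proof. by rewrite /bern_param; case: ifP => _ //; rewrite le_max lexx orbT. Qed.

Lemma bern_param_keep_prob y : 0 <= y -> bern_param gamma y + keep_prob y = 1.
Proof.
rewrite /bern_param /keep_prob le_eqVlt => /predU1P[<-|y_gt0].
  by rewrite eqxx add0r max_r ?ltW // divff // gt_eqF.
rewrite gt_eqF //; have [gamma_le|y_lt] := leP gamma y.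
  by rewrite max_l ?subrK // subr_ge0 ler_pdivrMr // mul1r.
rewrite max_r ?add0r ?divff ?gt_eqF //.
by rewrite subr_le0 ler_pdivlMr // mul1r ltW.
Qed.

End keep_prob.

Section integral_density.
Local Open Scope ereal_scope.
Context {d} {T : measurableType d} {R : realType}.
Context {mu : {sigma_finite_measure set T -> \bar R}}
  {nu : {finite_measure set T -> \bar R}} {g : T -> \bar R}.
Hypotheses (mg : measurable_fun [set: T] g)
  (nu_density : forall A, measurable A -> nu A = \int[mu]_(x in A) g x).

Lemma density_dominates : nu `<< mu.
Proof.
move=> N muN A mA AN; rewrite nu_density // null_set_integral //.
- exact: measurable_funTS.
- exact: muN.
Qed.

Lemma ge0_integral_density f D : measurable D -> measurable_fun D f ->
  (forall x, 0 <= f x) ->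
  \int[nu]_(x in D) f x = \int[mu]_(x in D) (f x * g x).
Proof.
move=> mD mf f0; have numu := density_dominates.
have mRN := measurable_int _ (Radon_Nikodym_SigmaFinite.f_integrable numu).
rewrite -(Radon_Nikodym_SigmaFinite.change_of_variables numu) //.
apply: ae_eq_integral => //.
- by apply: emeasurable_funM => //; exact: measurable_funTS.
- by apply: emeasurable_funM => //; exact: measurable_funTS.
apply: ae_eqe_mul2l; apply: integral_ae_eq => //.
- exact/integrableS/Radon_Nikodym_SigmaFinite.f_integrable.
- exact: measurable_funTS.
- by move=> A _ mA; rewrite -Radon_Nikodym_SigmaFinite.f_integral // nu_density.
Qed.
End integral_density.

Section mrestr_subprobability.
Context d (T : measurableType d) (R : realType).
Variables (P : probability T R) (D : set T) (mD : measurable D).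

Let mrestr_setT_le1 : (mrestr P mD [set: T] <= 1)%E.
Proof. by rewrite /mrestr setTI probability_le1. Qed.

HB.instance Definition _ :=
  isSubProbability.Build _ _ _ (mrestr P mD) mrestr_setT_le1.

End mrestr_subprobability.

Lemma ge0_integral_mrestr d (T : measurableType d) (R : realType)
    (mu : {measure set T -> \bar R}) (D : set T) (mD : measurable D)
    (f : T -> \bar R) :
  measurable_fun setT f -> (forall x, (0 <= f x)%E) ->
  (\int[mrestr mu mD]_x f x = \int[mu]_(x in D) f x)%E.
Proof.
move=> mf f0; rewrite -(setUv D) ge0_integral_setU ?setUv //; last 2 first.
- exact: measurableC.
- exact/disj_set2P/setICr.
rewrite [X in (_ + X)%E]null_set_integral ?adde0; last 3 first.
- exact: measurableC.
- exact: measurable_funTS.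
- by rewrite /= /mrestr setICl measure0.
apply: eq_measure_integral => A mA AD.
by rewrite /= /mrestr setIidl.
Qed.

Section active_evalue_validity.
Local Open Scope ereal_scope.
Context d (Omega : measurableType d) (R : realType) (P : probability Omega R).
Variables (gamma : R) (E F T : Omega -> R).
Hypotheses (gamma_gt0 : (0 < gamma)%R) (mF : measurable_fun setT F)
  (mT : measurable_fun setT T) (F_ge0 : forall w, (0 <= F w)%R)
  (T01 : forall w, T w = 0%R \/ T w = 1%R) (T_cond : cond_bern P gamma F E T).

Let T0 := T @^-1` [set 0%R].
Let T1 := T @^-1` [set 1%R].

Let mT0 : measurable T0. Proof. by rewrite -[T0]setTI; exact: mT. Qed.
Let mT1 : measurable T1. Proof. by rewrite -[T1]setTI; exact: mT. Qed.

Lemma probability_T0_preimage A : measurable A ->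
  P (F @^-1` A `&` T0) = \int[P]_(w in F @^-1` A) (keep_prob gamma (F w))%:E.
Proof.
move=> mA; set S := F @^-1` A.
have mS : measurable S by rewrite -[S]setTI; exact: mF.
have mkeep : measurable_fun S (fun w => (keep_prob gamma (F w))%:E).
  apply/measurable_EFinP/measurable_funTS/measurableT_comp => //.
  exact: measurable_keep_prob.
have PT1S : P (T1 `&` S) = \int[P]_(w in S) (bern_param gamma (F w))%:E.
  have -> : S = (fun w => (F w, E w)) @^-1` (A `*` setT).
    by apply/seteqP; split => w /=; [|case].
  exact: T_cond (measurableX mA measurableT).
have PS_int :
    P S = \int[P]_(w in S) (keep_prob gamma (F w))%:E + P (T1 `&` S).
  rewrite PT1S -ge0_integralD //.
  - under eq_integral do rewrite -EFinD addrC bern_param_keep_prob ?F_ge0 //.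
    by rewrite integral_cst // mul1e.
  - by move=> w _; rewrite lee_fin keep_prob_ge0.
  - by move=> w _; rewrite lee_fin bern_param_ge0.
  - apply/measurable_EFinP.
    apply: (eq_measurable_fun (fun w => 1 - keep_prob gamma (F w))%R).
      by move=> w _; apply/eqP; rewrite subr_eq bern_param_keep_prob ?F_ge0.
    by apply: measurable_funB => //; exact/measurable_EFinP.
have PS_split : P S = P (S `&` T0) + P (T1 `&` S).
  rewrite -measureU //; [|exact: measurableI..|].
  - congr (P _); apply/seteqP; split => [w Sw|w [[]|[]] //].
    by case: (T01 w) => Tw; [left|right].
  - apply/seteqP; split => // w [[_ Tw0] [Tw1 _]].
    by move: Tw1; rewrite /T1 /= Tw0 => /esym/eqP; rewrite oner_eq0.
have finT1S : P (T1 `&` S) \is a fin_num.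
  exact/fin_num_measure/measurableI.
move: PS_int; rewrite PS_split => /(congr1 (fun x => x - P (T1 `&` S))).
by rewrite !addeK.
Qed.

Lemma integral_T0 (h : R -> \bar R) : measurable_fun setT h ->
  (forall y, 0 <= h y) ->
  \int[P]_(w in T0) h (F w) =
  \int[P]_w (h (F w) * (keep_prob gamma (F w))%:E).
Proof.
move=> mh h0.
have mkeep : measurable_fun setT (fun y => (keep_prob gamma y)%:E).
  by apply/measurable_EFinP; exact: measurable_keep_prob.
have keep_density A : measurable A ->
    giry_map mF (mrestr P mT0) A =
    \int[giry_map mF P]_(y in A) (keep_prob gamma y)%:E.
  move=> mA; rewrite ge0_integral_pushforward //.
  - exact: probability_T0_preimage.
  - exact: measurable_funTS.
  - by move=> y _; rewrite lee_fin keep_prob_ge0.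
rewrite -ge0_integral_mrestr //; last exact: measurableT_comp.
transitivity (\int[giry_map mF (mrestr P mT0)]_y h y).
  by rewrite ge0_integral_pushforward.
rewrite (ge0_integral_density mkeep keep_density) //.
rewrite ge0_integral_pushforward //.
- exact: emeasurable_funM.
- by move=> y _; rewrite mule_ge0 // lee_fin keep_prob_ge0.
Qed.

Lemma integral_T0_F_le : \int[P]_w ((1 - T w) * F w)%:E <= gamma%:E.
Proof.
have mnorm : measurable_fun setT (fun y : R => (`|y|)%:E).
  by apply/measurable_EFinP; exact: normr_measurable.
have -> : \int[P]_w ((1 - T w) * F w)%:E = \int[P]_(w in T0) (`|F w|)%:E.
  rewrite [RHS]integral_mkcond; apply: eq_integral => w _; rewrite patchE.
  case: (T01 w) => Tw.
    by rewrite mem_set // Tw subr0 mul1r ger0_norm.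
  by rewrite memNset ?Tw ?subrr ?mul0r // /T0 /= Tw => /eqP; rewrite oner_eq0.
rewrite (integral_T0 _ mnorm) //.
apply: (@le_trans _ _ (\int[P]_w (cst gamma%:E) w)).
  apply: ge0_le_integral => //.
  - by move=> w _; rewrite mule_ge0 // lee_fin keep_prob_ge0.
  - apply: emeasurable_funM; first exact: measurableT_comp mnorm mF.
    apply/measurable_EFinP/measurableT_comp => //.
    exact: measurable_keep_prob.
  - by move=> w _; rewrite -EFinM lee_fin ger0_norm // mulr_keep_prob_le.
by rewrite integral_cst // /= probability_setT mule1.
Qed.

Hypotheses (gamma_le1 : (gamma <= 1)%R) (mE : measurable_fun setT E)
  (E_ge0 : forall w, (0 <= E w)%R) (E_mean_le1 : \int[P]_w (E w)%:E <= 1).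

Let T_F_ge0 w : (0 <= (1 - T w) * F w)%R.
Proof. by case: (T01 w) => ->; rewrite ?subr0 ?mul1r ?subrr ?mul0r. Qed.

Let T_E_le w : (0 <= T w * (1 - gamma) * E w <= (1 - gamma) * E w)%R.
Proof.
have E_scaled_ge0 : (0 <= (1 - gamma) * E w)%R by rewrite mulr_ge0 ?subr_ge0.
by case: (T01 w) => ->; rewrite ?mul0r ?mul1r ?lexx ?E_scaled_ge0.
Qed.

Lemma active_evalue_ge0 w : (0 <= active_evalue gamma (F w) (E w) (T w))%R.
Proof. by rewrite addr_ge0 // (andP (T_E_le w)).1. Qed.

Lemma integral_T_E_le :
  \int[P]_w (T w * (1 - gamma) * E w)%:E <= (1 - gamma)%:E.
Proof.
have gamma_compl_ge0 : (0 <= 1 - gamma)%R by rewrite subr_ge0.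
apply: (@le_trans _ _ (\int[P]_w ((1 - gamma)%:E * (E w)%:E))).
  apply: ge0_le_integral => //.
  - by move=> w _; rewrite lee_fin (andP (T_E_le w)).1.
  - apply/measurable_EFinP; apply: measurable_funM => //.
    exact: measurable_funM.
  - by apply/measurable_EFinP; exact: measurable_funM.
  - by move=> w _; rewrite -EFinM lee_fin (andP (T_E_le w)).2.
rewrite ge0_integralZl //; last 2 first.
- exact/measurable_EFinP.
- by move=> w _; rewrite lee_fin.
by rewrite -[leRHS]mule1 lee_wpmul2l.
Qed.

Lemma integral_active_evalue_le1 :
  \int[P]_w (active_evalue gamma (F w) (E w) (T w))%:E <= 1.
Proof.
rewrite /active_evalue; under eq_integral do rewrite EFinD.
rewrite ge0_integralD //; last 4 first.
- by move=> w _; rewrite lee_fin.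
- apply/measurable_EFinP; apply: measurable_funM => //.
  exact: measurable_funB.
- by move=> w _; rewrite lee_fin (andP (T_E_le w)).1.
- apply/measurable_EFinP; apply: measurable_funM => //.
  exact: measurable_funM.
apply: le_trans (leeD integral_T0_F_le integral_T_E_le) _.
by rewrite -EFinD addrC subrK.
Qed.

End active_evalue_validity.

Theorem proposition1 (d : measure_display) (Omega : measurableType d)
  (R : realType) (P : probability Omega R) (gamma : R) (E F T : Omega -> R) :
  0 < gamma <= 1 ->
  measurable_fun setT E -> measurable_fun setT F -> measurable_fun setT T ->
  (forall w, 0 <= E w) ->
  (\int[P]_w (E w)%:E <= 1)%E ->
  (forall w, 0 <= F w) ->
  (forall w, T w = 0 \/ T w = 1) ->
  cond_bern P gamma F E T ->
  (forall w, 0 <= active_evalue gamma (F w) (E w) (T w)) /\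
  (\int[P]_w (active_evalue gamma (F w) (E w) (T w))%:E <= 1)%E.
Proof.
move=> /andP[gamma_gt0 gamma_le1] mE mF mT E_ge0 E_mean_le1 F_ge0 T01 T_cond.
split=> [w|]; first exact: active_evalue_ge0.
exact: integral_active_evalue_le1.
Qed.
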